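(* Let $A$ be a subset of a group $G$. (a) $\operatorname{VC}^\ell_B(A)\leq\operatorname{VC}^\ell_G(A)$ for every $B\subseteq G$. (b) $\operatorname{VC}^\ell_G(A)-1\leq\dim_{\ell\mathrm{VC}}(A)\leq\operatorname{VC}^\ell_G(A)$. (c) $\operatorname{VC}^\ell_G(A)$ equals the dual VC-dimension of $\mathcal F^r_G(A)$; hence $\operatorname{VC}^\ell_G(A)<2\exp(\operatorname{VC}^r_G(A))$ and $\operatorname{VC}^r_G(A)<2\exp(\operatorname{VC}^\ell_G(A))$. (d) $\dim_{\ell\mathrm{VC}}(A)$ equals the dual VC-dimension of $\mathcal F^r_{A^{-1}}(A)$; hence $\dim_{\ell\mathrm{VC}}(A)<2\exp(\operatorname{VC}^r_{A^{-1}}(A))$ and $\operatorname{VC}^r_{A^{-1}}(A)<2\exp(\dim_{\ell\mathrm{VC}}(A))$. (e) The statements obtained from (a)–(d) by exchanging the roles of $\ell$ and $r$ throughout also hold.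
   Context: A set system $\mathcal F$ on $X$ shatters $Y\subseteq X$ if $\{Y\cap S:S\in\mathcal F\}$ is the power set of $Y$; $\operatorname{VC}(\mathcal F)$ is the maximum size of a finite shattered set ($\infty$ if unbounded). The dual system $\mathcal F^*$ is the set system on $\mathcal F$ consisting of the sets $\mathcal F_x=\{S\in\mathcal F:x\in S\}$ for $x\in\bigcup\mathcal F$; the dual VC-dimension of $\mathcal F$ is $\operatorname{VC}(\mathcal F^* )$. For $A,B\subseteq G$: $\mathcal F^\ell_B(A)=\{xA:x\in B\}$, $\mathcal F^r_B(A)=\{Ax:x\in B\}$, $\operatorname{VC}^\bullet_B(A)=\operatorname{VC}(\mathcal F^\bullet_B(A))$ for $\bullet\in\{\ell,r\}$. Sisask's variants: $\mathcal F^\ell(A|B)=\{xA\cap B:x\in BA^{-1}\}$, $\mathcal F^r(A|B)=\{Ax\cap B:x\in A^{-1}B\}$, $\dim_{\bullet\mathrm{VC}}(A|B)=\operatorname{VC}(\mathcal F^\bullet(A|B))$, $\dim_{\bullet\mathrm{VC}}(A)=\dim_{\bullet\mathrm{VC}}(A|A)$. $\exp$ is base $2$. *)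

From HB Require Import structures.
From mathcomp Require Import all_boot.
From mathcomp Require Import boolp classical_sets.
Set Implicit Arguments. Unset Strict Implicit. Unset Printing Implicit Defensive.
Local Open Scope classical_set_scope.

Definition shatters {X : Type} (F : set (set X)) (Y : set X) : Prop :=
  [set Y `&` S | S in F] = [set Z | Z `<=` Y].

(* VC_le F n  <->  VC(F) <= n  (in nat ∪ {∞}): every finite shattered set
   (presented as the range of an injection from 'I_k) has size <= n. *)
Definition VC_le {X : Type} (F : set (set X)) (n : nat) : Prop :=
  forall (k : nat) (f : 'I_k -> X), injective f -> shatters F (range f) -> (k <= n)%N.

(* VC(F) <= VC(F') in nat ∪ {∞} *)
Definition VC_leq {X Y : Type} (F : set (set X)) (F' : set (set Y)) : Prop :=
  forall n, VC_le F' n -> VC_le F n.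

Definition VC_eq {X Y : Type} (F : set (set X)) (F' : set (set Y)) : Prop :=
  VC_leq F F' /\ VC_leq F' F.

(* VC(F) - 1 <= VC(F') in nat ∪ {∞} *)
Definition VC_pred_leq {X Y : Type} (F : set (set X)) (F' : set (set Y)) : Prop :=
  forall n, VC_le F' n -> VC_le F n.+1.

(* VC(F) < 2 exp(VC(F')) = 2 * 2^VC(F'), whenever VC(F') is finite *)
Definition VC_lt_2exp {X Y : Type} (F : set (set X)) (F' : set (set Y)) : Prop :=
  forall n, VC_le F' n -> VC_le F (2 * 2 ^ n).-1.

Definition dual {X : Type} (F : set (set X)) : set (set (set X)) :=
  [set [set S | F S /\ S x] | x in \bigcup_(S in F) S].

Section GroupDefs.
Local Open Scope group_scope.
Variable G : groupType.

Definition lcoset (x : G) (A : set G) : set G := [set x * a | a in A].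
Definition rcoset (A : set G) (x : G) : set G := [set a * x | a in A].
Definition setinv (A : set G) : set G := [set a^-1 | a in A].
Definition setmul (A B : set G) : set G :=
  [set z | exists2 a, A a & exists2 b, B b & z = a * b].

Definition Fl (B A : set G) : set (set G) := [set lcoset x A | x in B].
Definition Fr (B A : set G) : set (set G) := [set rcoset A x | x in B].

Definition Fl_rel (A B : set G) : set (set G) :=
  [set lcoset x A `&` B | x in setmul B (setinv A)].
Definition Fr_rel (A B : set G) : set (set G) :=
  [set rcoset A x `&` B | x in setmul (setinv A) B].
End GroupDefs.

(* The incidence x \in yA holds iff y^-1 \in A x^-1, so the left translates of A traced on C
   form the transpose of the right translates A c^-1 (c \in C): Sisask's F^l(A|C) is the dual of
   F^r_{C^-1}(A).  With C = G and C = A this gives (c) and (d); Assouad's bound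
   VC(dual F) < 2^(VC(F)+1) then yields the exponential bounds, since a family of 2^(n+1) sets
   shattered by the dual, indexed by the cube {0,1}^(n+1), produces n+1 points shattered by F.
   For (b), translate a shattered set into A and drop one of its points x0: every trace is then
   cut out by some yA containing x0, so y \in AA^-1 and yA may be replaced by yA \cap A.
   Part (e) is (a)-(d) in the opposite group. *)

From HB Require Import structures.
From mathcomp Require Import all_boot.
From mathcomp Require Import boolp classical_sets.
Local Open Scope classical_set_scope.

Definition shatters_fam {X I : Type} (F : set (set X)) (f : I -> X) : Prop :=
  forall P : set I, exists2 S, F S & forall i, S (f i) <-> P i.

Section Shattering.
Context {X : Type} {F : set (set X)}.

Lemma shatters_fam_inj {I : Type} {f : I -> X} : shatters_fam F f -> injective f.
Proof.
move=> sh i j fij; have [S _ eS] := sh [set l | l = i].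
by apply/esym/(eS j); rewrite -fij; apply/(eS i).
Qed.

Lemma shatters_rangeP {I : Type} {f : I -> X} :
  injective f -> shatters F (range f) <-> shatters_fam F f.
Proof.
move=> finj; split => [sh P | sh].
- have : [set Z | Z `<=` range f] (f @` P) by move=> _ [i _ <-]; exists i.
  rewrite -sh => -[S FS eS]; exists S => // i; split => [Sfi | Pi].
  + have : (range f `&` S) (f i) by split => //; exists i.
    by rewrite eS => -[j Pj /finj <-].
  + have : (f @` P) (f i) by exists i.
    by rewrite -eS => -[].
- apply/seteqP; split => [_ [S _ <-] x [] //|Z ZY].
  have [S FS eS] := sh (fun i => Z (f i)).
  exists S => //; apply/seteqP; split => [_ [[i _ <-]] /eS //|x Zx].
  by have [i _ fx] := ZY x Zx; subst x; split; [exists i | apply/eS].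
Qed.

Lemma shatters_fam_comp {I J : Type} {f : I -> X} {g : J -> I} :
  injective g -> shatters_fam F f -> shatters_fam F (f \o g).
Proof.
move=> ginj sh P; have [S FS eS] := sh [set i | exists2 j, g j = i & P j].
exists S => // j; rewrite eS; split => [[j' /ginj <-] //|Pj]; by exists j.
Qed.

Lemma shatters_fam_sub (F' : set (set X)) {I : Type} (f : I -> X) :
  F `<=` F' -> shatters_fam F f -> shatters_fam F' f.
Proof. by move=> FF' sh P; have [S /FF' F'S eS] := sh P; exists S. Qed.

Lemma shatters_fam_setI (B : set X) {I : Type} (f : I -> X) :
  shatters_fam [set S `&` B | S in F] f -> shatters_fam F f.
Proof.
move=> sh P; have [_ [S0 _ <-] eS0] := sh setT.
have Bf i : B (f i) by have [] : (S0 `&` B) (f i) by apply/eS0.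
have [_ [S FS <-] eS] := sh P; exists S => // i.
by rewrite -eS; split => [Sfi|[]].
Qed.

Lemma VC_leP n :
  VC_le F n <-> forall k (f : 'I_k -> X), shatters_fam F f -> (k <= n)%N.
Proof.
split=> [hv k f sh | hv k f finj /(shatters_rangeP finj)]; last exact: hv.
have finj := shatters_fam_inj sh.
exact: hv _ _ finj ((shatters_rangeP finj).2 sh).
Qed.

Lemma VC_le_card {n : nat} {T : finType} {f : T -> X} :
  VC_le F n -> shatters_fam F f -> (#|T| <= n)%N.
Proof.
move=> /VC_leP hv sh; apply: (hv _ (f \o enum_val)).
exact/shatters_fam_comp/sh/enum_val_inj.
Qed.

End Shattering.

Section Comparison.
Variables (X Y : Type) (F : set (set X)) (F' : set (set Y)).

Lemma VC_leq_of_shatters :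
  (forall k (f : 'I_k.+1 -> X), shatters_fam F f ->
     exists g : 'I_k.+1 -> Y, shatters_fam F' g) ->
  VC_leq F F'.
Proof.
move=> hF n /VC_leP hv; apply/VC_leP => -[//|k] f /hF [g]; exact: hv.
Qed.

Lemma VC_pred_leq_of_shatters :
  (forall k (f : 'I_k.+1 -> X), shatters_fam F f ->
     exists g : 'I_k -> Y, shatters_fam F' g) ->
  VC_pred_leq F F'.
Proof.
move=> hF n /VC_leP hv; apply/VC_leP => -[//|k] f /hF [g]; exact: hv.
Qed.

End Comparison.

Lemma VC_leq_trans {X Y Z : Type} (F1 : set (set X)) (F2 : set (set Y)) (F3 : set (set Z)) :
  VC_leq F1 F2 -> VC_leq F2 F3 -> VC_leq F1 F3.
Proof. by move=> h12 h23 n /h23 /h12. Qed.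

Lemma VC_leq_sub {X : Type} (F F' : set (set X)) : F `<=` F' -> VC_leq F F'.
Proof.
by move=> FF'; apply: VC_leq_of_shatters => k f sh; exists f; apply: shatters_fam_sub sh.
Qed.

Lemma VC_leq_setI {X : Type} (F : set (set X)) (B : set X) :
  VC_leq [set S `&` B | S in F] F.
Proof.
by apply: VC_leq_of_shatters => k f sh; exists f; apply: shatters_fam_setI sh.
Qed.

Section Dual.
Variables (X : Type) (F : set (set X)).

Lemma shatters_fam_dualP {I : Type} (h : I -> set X) :
  shatters_fam (dual F) h <->
  (forall i, F (h i)) /\
  forall P : set I, exists2 x, (\bigcup_(S in F) S) x & forall i, h i x <-> P i.
Proof.
split=> [sh | [Fh sh] P].
- have Fh i : F (h i).
    by have [_ [x _ <-] e] := sh setT; have [] : [set S | F S /\ S x] (h i) by apply/e.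
  split=> // P; have [_ [x Ux <-] e] := sh P; exists x => // i.
  by rewrite -e; split=> [|[]].
- have [x Ux e] := sh P; exists [set S | F S /\ S x]; first by exists x.
  by move=> i; rewrite -e; split=> [[]|]; last split.
Qed.

Lemma shatters_fam_dual_cube {I : finType} (p : {ffun I -> bool} -> X) :
  shatters_fam F p -> exists S : I -> set X, shatters_fam (dual F) S.
Proof.
move=> sh; have [S0 FS0 eS0] := sh setT.
have /choice [S hS] i : exists S, F S /\ forall w, S (p w) <-> w i.
  by have [S FS eS] := sh (fun w => w i); exists S.
exists S; apply/shatters_fam_dualP; split=> [i | P]; first by case: (hS i).
pose w := [ffun i => `[< P i >]].
exists (p w); first by exists S0 => //; apply/eS0.
by move=> i; rewrite (hS i).2 ffunE; split=> /asboolP.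
Qed.

Lemma shatters_fam_of_dual_cube {I : finType} (h : {ffun I -> bool} -> set X) :
  shatters_fam (dual F) h -> exists y : I -> X, shatters_fam F y.
Proof.
move=> /shatters_fam_dualP [Fh sh].
have /choice [y hy] i : exists y, forall w, h w y <-> w i.
  by have [y _ e] := sh (fun w => w i); exists y.
exists y => P; exists (h [ffun i => `[< P i >]]) => // i.
by rewrite hy ffunE; split=> /asboolP.
Qed.

End Dual.

Lemma VC_le_cube {X Y : Type} (F : set (set X)) (F' : set (set Y)) n :
  (forall h : {ffun 'I_n.+1 -> bool} -> X, shatters_fam F h ->
     exists y : 'I_n.+1 -> Y, shatters_fam F' y) ->
  VC_le F' n -> VC_le F (2 * 2 ^ n).-1.
Proof.
move=> hF hv; apply/VC_leP => k f sh; rewrite leqNgt; apply/negP => hk.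
have cube_le : (#|{ffun 'I_n.+1 -> bool}| <= k)%N.
  by rewrite card_ffun card_bool card_ord expnS; case: (2 * 2 ^ n)%N hk.
have embed_inj : injective (widen_ord cube_le \o enum_rank).
  by move=> w1 w2 /(congr1 val) /= /val_inj /enum_rank_inj.
have [y shy] := hF _ (shatters_fam_comp embed_inj sh).
by have := VC_le_card hv shy; rewrite card_ord ltnn.
Qed.

Lemma VC_le_dual {X : Type} (F : set (set X)) n :
  VC_le F n -> VC_le (dual F) (2 * 2 ^ n).-1.
Proof. by apply: VC_le_cube => h; apply: shatters_fam_of_dual_cube. Qed.

Lemma VC_le_of_dual {X : Type} (F : set (set X)) n :
  VC_le (dual F) n -> VC_le F (2 * 2 ^ n).-1.
Proof. by apply: VC_le_cube => p; apply: shatters_fam_dual_cube. Qed.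

Lemma VC_lt_2exp_of_dual {X Y : Type} (F : set (set X)) (F' : set (set Y)) :
  VC_eq F (dual F') -> VC_lt_2exp F F' /\ VC_lt_2exp F' F.
Proof.
move=> [le_dual dual_le]; split=> n hn.
  exact/le_dual/VC_le_dual.
exact/VC_le_of_dual/dual_le.
Qed.

Section Translates.
Local Open Scope group_scope.
Variable G : groupType.
Implicit Types (A B C : set G) (x y z : G).

Lemma lcosetE x A y : lcoset x A y = A (x^-1 * y).
Proof.
rewrite propeqE; split=> [[a Aa <-]|Ay]; first by rewrite mulKg.
by exists (x^-1 * y); rewrite ?mulVKg.
Qed.

Lemma rcosetE A x y : rcoset A x y = A (y * x^-1).
Proof.
rewrite propeqE; split=> [[a Aa <-]|Ay]; first by rewrite mulgK.
by exists (y * x^-1); rewrite ?mulgVK.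
Qed.

Lemma setinvE A x : setinv A x = A x^-1.
Proof.
rewrite propeqE; split=> [[a Aa <-]|Ax]; first by rewrite invgK.
by exists x^-1; rewrite ?invgK.
Qed.

Lemma setinvT : setinv [set: G] = [set: G].
Proof. by rewrite funeqE => x; rewrite setinvE. Qed.

Lemma lcosetMl x y A z : lcoset (x * y) A (x * z) = lcoset y A z.
Proof. by rewrite !lcosetE invgM -mulgA mulKg. Qed.

Lemma Fl_relE A C : Fl_rel A C = [set S `&` C | S in Fl (setmul C (setinv A)) A].
Proof. by rewrite /Fl image_comp. Qed.

Lemma VC_leq_Fl B A : VC_leq (Fl B A) (Fl setT A).
Proof. by apply: VC_leq_sub => _ [x _ <-]; exists x. Qed.

Lemma VC_leq_Fl_rel A C : VC_leq (Fl_rel A C) (Fl setT A).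
Proof. by rewrite Fl_relE; apply: VC_leq_trans (VC_leq_setI _ _) (VC_leq_Fl _ _). Qed.

Lemma VC_leq_Fl_rel_setT A : VC_leq (Fl setT A) (Fl_rel A setT).
Proof.
apply: VC_leq_of_shatters => k f sh; exists f => P.
have [_ [x _ <-] ex] := sh setT.
have Aa : A (x^-1 * f ord0) by rewrite -lcosetE; apply/ex.
have [_ [z _ <-] ez] := sh P; exists (lcoset z A `&` setT).
  exists z => //; exists (z * (x^-1 * f ord0)) => //.
  by exists (x^-1 * f ord0)^-1; rewrite ?mulgK // setinvE invgK.
by move=> i; rewrite setIT.
Qed.

Lemma VC_pred_leq_Fl_rel A : VC_pred_leq (Fl setT A) (Fl_rel A A).
Proof.
apply: VC_pred_leq_of_shatters => k f sh.
have [_ [x _ <-] ex] := sh setT.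
pose g i := x^-1 * f i.
have Ag i : A (g i) by rewrite -lcosetE; apply/ex.
have shg : shatters_fam (Fl setT A) g.
  move=> P; have [_ [z _ <-] ez] := sh P.
  by exists (lcoset (x^-1 * z) A); [exists (x^-1 * z) | move=> i; rewrite lcosetMl].
exists (g \o lift ord0) => P.
have [_ [z _ <-] ez] := shg [set l | l = ord0 \/ exists2 i, l = lift ord0 i & P i].
have zA0 : lcoset z A (g ord0) by apply/ez; left.
exists (lcoset z A `&` A).
  exists z => //; exists (g ord0) => //; exists (z^-1 * g ord0)^-1.
    by rewrite setinvE invgK -lcosetE.
  by rewrite invgM invgK mulVKg.
move=> i; split=> [[/ez [/(congr1 val) // | [j /lift_inj <-]]] // | Pi].
by split; [apply/ez; right; exists i | apply: Ag].
Qed.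

Lemma VC_eq_Fl_rel_dual A C : VC_eq (Fl_rel A C) (dual (Fr (setinv C) A)).
Proof.
split; apply: VC_leq_of_shatters => k.
- move=> f sh; have [_ [z0 _ <-] e0] := sh setT.
  have Cf i : C (f i) by have [] : (lcoset z0 A `&` C) (f i) by apply/e0.
  exists (fun i => rcoset A (f i)^-1); apply/shatters_fam_dualP; split=> [i | P].
    by exists (f i)^-1; rewrite ?setinvE ?invgK.
  have [_ [_ [c Cc [b Ab ->]] <-] ez] := sh P; rewrite setinvE in Ab.
  exists (c * b)^-1.
    exists (rcoset A c^-1); first by exists c^-1; rewrite ?setinvE ?invgK.
    by rewrite rcosetE invgK invgM mulgVK.
  by move=> i; rewrite rcosetE invgK -lcosetE -ez; split=> [|[]].
- move=> h /shatters_fam_dualP [Frh sh].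
  have /choice [x hx] i : exists x, C x^-1 /\ h i = rcoset A x.
    by have [x Cx <-] := Frh i; exists x; rewrite -setinvE.
  exists (fun i => (x i)^-1) => P.
  have [y [_ [d Cd <-] Ay] ey] := sh P; rewrite setinvE in Cd.
  exists (lcoset y^-1 A `&` C).
    exists y^-1 => //; exists d^-1 => //; exists (y * d^-1)^-1.
      by rewrite setinvE invgK -rcosetE.
    by rewrite invgM mulVKg.
  move=> i; rewrite -ey (hx i).2 /= lcosetE invgK -rcosetE.
  by split=> [[]|]; last split; last case: (hx i).
Qed.

Lemma VC_eq_Fl_dual A : VC_eq (Fl setT A) (dual (Fr setT A)).
Proof.
have [le_dual dual_le] := VC_eq_Fl_rel_dual A setT; rewrite setinvT in le_dual dual_le.
split; first exact: VC_leq_trans (VC_leq_Fl_rel_setT A) le_dual.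
exact: VC_leq_trans dual_le (VC_leq_Fl_rel A setT).
Qed.

End Translates.

Lemma VC_Fl_bounds (G : groupType) (A : set G) :
  (forall B : set G, VC_leq (Fl B A) (Fl setT A)) /\
  (VC_pred_leq (Fl setT A) (Fl_rel A A) /\ VC_leq (Fl_rel A A) (Fl setT A)) /\
  (VC_eq (Fl setT A) (dual (Fr setT A)) /\
   VC_lt_2exp (Fl setT A) (Fr setT A) /\ VC_lt_2exp (Fr setT A) (Fl setT A)) /\
  (VC_eq (Fl_rel A A) (dual (Fr (setinv A) A)) /\
   VC_lt_2exp (Fl_rel A A) (Fr (setinv A) A) /\
   VC_lt_2exp (Fr (setinv A) A) (Fl_rel A A)).
Proof.
split; first by move=> B; apply: VC_leq_Fl.
split; first by split; [exact: VC_pred_leq_Fl_rel | exact: VC_leq_Fl_rel].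
split; first by split; [exact: VC_eq_Fl_dual | exact/VC_lt_2exp_of_dual/VC_eq_Fl_dual].
by split; [exact: VC_eq_Fl_rel_dual | exact/VC_lt_2exp_of_dual/VC_eq_Fl_rel_dual].
Qed.

Definition converse_group (G : groupType) : Type := G.
HB.instance Definition _ (G : groupType) := Choice.copy (converse_group G) G.

Section ConverseGroup.
Local Open Scope group_scope.
Variable G : groupType.

Let cmul (x y : converse_group G) : converse_group G := (y : G) * x.

Fact cmulA : associative cmul.
Proof. by move=> x y z; rewrite /cmul mulgA. Qed.
Fact cmul1g : left_id (1 : G) cmul.
Proof. by move=> x; rewrite /cmul mulg1. Qed.
Fact cmulg1 : right_id (1 : G) cmul.
Proof. by move=> x; rewrite /cmul mul1g. Qed.
Fact cmulVg : left_inverse (1 : G) (@inv G) cmul.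
Proof. by move=> x; rewrite /cmul mulgV. Qed.
Fact cmulgV : right_inverse (1 : G) (@inv G) cmul.
Proof. by move=> x; rewrite /cmul mulVg. Qed.

HB.instance Definition _ := isGroup.Build (converse_group G) cmulA cmul1g cmulg1 cmulVg cmulgV.

Lemma Fr_rel_converse (A C : set G) : Fr_rel A C = Fl_rel (G := converse_group G) A C.
Proof.
rewrite /Fr_rel /Fl_rel; congr image; apply/seteqP.
by split=> z [a Aa [b Ab ->]]; exists b => //; exists a.
Qed.

End ConverseGroup.

Theorem propositionA1 (G : groupType) (A : set G) :
  (* (a) *)
  (forall B : set G, VC_leq (Fl B A) (Fl setT A)) /\
  (* (b) *)
  (VC_pred_leq (Fl setT A) (Fl_rel A A) /\ VC_leq (Fl_rel A A) (Fl setT A)) /\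
  (* (c) *)
  (VC_eq (Fl setT A) (dual (Fr setT A)) /\
   VC_lt_2exp (Fl setT A) (Fr setT A) /\ VC_lt_2exp (Fr setT A) (Fl setT A)) /\
  (* (d) *)
  (VC_eq (Fl_rel A A) (dual (Fr (setinv A) A)) /\
   VC_lt_2exp (Fl_rel A A) (Fr (setinv A) A) /\
   VC_lt_2exp (Fr (setinv A) A) (Fl_rel A A)) /\
  (* (e) : (a)-(d) with l and r exchanged *)
  ((forall B : set G, VC_leq (Fr B A) (Fr setT A)) /\
   (VC_pred_leq (Fr setT A) (Fr_rel A A) /\ VC_leq (Fr_rel A A) (Fr setT A)) /\
   (VC_eq (Fr setT A) (dual (Fl setT A)) /\
    VC_lt_2exp (Fr setT A) (Fl setT A) /\ VC_lt_2exp (Fl setT A) (Fr setT A)) /\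
   (VC_eq (Fr_rel A A) (dual (Fl (setinv A) A)) /\
    VC_lt_2exp (Fr_rel A A) (Fl (setinv A) A) /\
    VC_lt_2exp (Fl (setinv A) A) (Fr_rel A A))).
Proof.
have [a [b [c d]]] := VC_Fl_bounds G A.
(* Fl and Fr of the converse group are Fr and Fl of G up to conversion. *)
have e := VC_Fl_bounds (converse_group G) A; rewrite -Fr_rel_converse in e.
by do 4!split=> //.
Qed.
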